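(* Fix $\sigma>0$, let $\lambda=-\sigma$, and let $q_1,\ldots,q_n\in\Delta^d$ be $n$ i.i.d. samples from the Dirichlet perturbation model $Q=p\oplus D$ described in the context. Consider the fixed-point iteration: given $p(k)\in\Delta^d$, set $\theta(k)=\big(\tfrac{p^0(k)}{\lambda p^1(k)},\ldots,\tfrac{p^0(k)}{\lambda p^d(k)}\big)$, $y_i=F(q_i)=\big(\tfrac{q_i^1}{q_i^0},\ldots,\tfrac{q_i^d}{q_i^0}\big)$, $$\eta(k+1)=\sum_{i=1}^n w_i(\theta(k))\,y_i,\qquad w_i(\theta)=\frac{1/(1+\lambda\,\theta\cdot y_i)}{\sum_{j=1}^n 1/(1+\lambda\,\theta\cdot y_j)},$$ and let $p(k+1)=\Big(\frac{1}{1+\sum_{j=1}^d\eta^j(k+1)},\frac{\eta^1(k+1)}{1+\sum_{j=1}^d\eta^j(k+1)},\ldots,\frac{\eta^d(k+1)}{1+\sum_{j=1}^d\eta^j(k+1)}\Big)$. Then $$p(k+1)=p(k)\oplus\Big(\frac1n\sum_{i=1}^n (q_i\ominus p(k))\Big),$$ where $\frac1n\sum_{i=1}^n$ denotes the ordinary Euclidean average in $\mathbb{R}^{d+1}$. In particular, the update does not depend on $\lambda$ (equivalently on $\sigma$).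
   Context: $\Delta^d=\{p=(p^0,\ldots,p^d)\in(0,1)^{d+1}:p^0+\cdots+p^d=1\}$ is the open unit simplex (superscripts denote components). Perturbation: $p\oplus q:=\big(\frac{p^jq^j}{\sum_{l=0}^d p^lq^l}\big)_{j=0}^d$; difference: $p\ominus q:=\big(\frac{p^j/q^j}{\sum_{l=0}^d p^l/q^l}\big)_{j=0}^d$. Dirichlet perturbation model: for $p\in\Delta^d$ (the parameter) and $D=(D^0,\ldots,D^d)$ a Dirichlet random vector with all parameters equal to $\frac{1}{\sigma(1+d)}$, the observation is $Q=p\oplus D\in\Delta^d$. This model is a $\lambda$-exponential family $(1+\lambda\theta\cdot F(q))_+^{1/\lambda}e^{-\varphi(\theta)}$ with $\lambda=-\sigma$, natural parameter $\theta=\big(\frac{p^0}{\lambda p^1},\ldots,\frac{p^0}{\lambda p^d}\big)\in(-\infty,0)^d$, statistic $F(q)=\big(\frac{q^1}{q^0},\ldots,\frac{q^d}{q^0}\big)$, and dual parameter $\eta=\big(\frac{p^1}{p^0},\ldots,\frac{p^d}{p^0}\big)=\frac1\lambda\big(\frac1{\theta^1},\ldots,\frac1{\theta^d}\big)\in(0,\infty)^d$; the iteration in the claim is the general fixed-point iteration $\eta(k+1)=\sum_i w_i(\theta(k))y_i$, $\theta(k+1)=\frac1\lambda(1/\eta^1(k+1),\ldots,1/\eta^d(k+1))$ written in terms of the simplex parameter $p$. *)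

From mathcomp Require Import all_boot all_order all_algebra.
Set Implicit Arguments. Unset Strict Implicit. Unset Printing Implicit Defensive.
Import Order.TTheory GRing.Theory Num.Theory.
Local Open Scope ring_scope.

Section Simplex.
Variable R : realFieldType.
Variable d : nat.

(* Points of R^{d+1}, components indexed 0..d; component 0 is ord0 and
   component j+1 (j : 'I_d) is lift ord0 j. *)

Definition in_simplex (p : 'I_d.+1 -> R) : Prop :=
  (forall j, 0 < p j) /\ \sum_(j < d.+1) p j = 1.

Definition perturb (p q : 'I_d.+1 -> R) : 'I_d.+1 -> R :=
  fun j => p j * q j / \sum_(l < d.+1) p l * q l.

Definition cdiff (p q : 'I_d.+1 -> R) : 'I_d.+1 -> R :=
  fun j => (p j / q j) / \sum_(l < d.+1) p l / q l.

Definition theta_of (lam : R) (p : 'I_d.+1 -> R) : 'I_d -> R :=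
  fun j => p ord0 / (lam * p (lift ord0 j)).

Definition Fstat (q : 'I_d.+1 -> R) : 'I_d -> R :=
  fun j => q (lift ord0 j) / q ord0.

Definition dotd (u v : 'I_d -> R) : R := \sum_(j < d) u j * v j.

Definition weight (lam : R) (n : nat) (y : 'I_n -> 'I_d -> R)
    (th : 'I_d -> R) (i : 'I_n) : R :=
  (1 + lam * dotd th (y i))^-1 /
  \sum_(k < n) (1 + lam * dotd th (y k))^-1.

Definition eta_next (lam : R) (n : nat) (y : 'I_n -> 'I_d -> R)
    (th : 'I_d -> R) : 'I_d -> R :=
  fun j => \sum_(i < n) weight lam y th i * y i j.

Definition p_of_eta (eta : 'I_d -> R) : 'I_d.+1 -> R :=
  fun j => match unlift ord0 j with
           | Some j' => eta j' / (1 + \sum_(l < d) eta l)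
           | None => 1 / (1 + \sum_(l < d) eta l)
           end.

Definition fp_update (sigma : R) (n : nat) (q : 'I_n -> 'I_d.+1 -> R)
    (p : 'I_d.+1 -> R) : 'I_d.+1 -> R :=
  p_of_eta (eta_next (- sigma) (fun i => Fstat (q i)) (theta_of (- sigma) p)).

Definition avg (n : nat) (v : 'I_n -> 'I_d.+1 -> R) : 'I_d.+1 -> R :=
  fun j => n%:R^-1 * \sum_(i < n) v i j.

End Simplex.

From mathcomp Require Import all_boot all_order all_algebra.
From mathcomp Require Import ring.
Import Order.TTheory GRing.Theory Num.Theory.
Local Open Scope ring_scope.

(* Write S_i = \sum_l q_i^l / p^l for the normalizing constant of q_i (-) p,
   and B^l = p^l \sum_i (q_i (-) p)^l = \sum_i q_i^l / S_i ([pooled] below).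
   Since 1 + lam theta . F(q_i) = p^0 S_i / q_i^0, the weights are
   proportional to q_i^0 / S_i, the factor lam cancels, and
   eta(k+1) = (B^1, ..., B^d) / B^0.  Mapping back to the simplex normalizes
   (B^0, ..., B^d), which is exactly p (+) (n^-1 \sum_i q_i (-) p), because
   (+) is invariant under rescaling. *)

Lemma sumr_ord_gt0 (R : numDomainType) m (F : 'I_m -> R) :
  (0 < m)%N -> (forall i, 0 < F i) -> 0 < \sum_(i < m) F i.
Proof.
case: m F => // m F _ F_gt0; rewrite big_ord_recl ltr_pwDl //.
by apply: sumr_ge0 => i _; apply: ltW.
Qed.

Lemma perturb_scaler (R : realFieldType) d (c : R) (p v : 'I_d.+1 -> R) :
  c != 0 -> perturb p (fun j => c * v j) =1 perturb p v.
Proof.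
move=> c_neq0 j; rewrite /perturb.
under eq_bigr do rewrite mulrCA.
by rewrite -mulr_sumr invfM [p j * _]mulrCA mulrACA mulfV // mul1r.
Qed.

Lemma p_of_eta_ratio (R : realFieldType) d (eta : 'I_d -> R)
    (v : 'I_d.+1 -> R) :
  v ord0 != 0 -> eta =1 (fun j => v (lift ord0 j) / v ord0) ->
  p_of_eta eta =1 (fun j => v j / \sum_(l < d.+1) v l).
Proof.
move=> v0_neq0 eta_ratio j.
have sum_eta : 1 + \sum_(l < d) v (lift ord0 l) / v ord0
    = (\sum_(l < d.+1) v l) / v ord0.
  by rewrite big_ord_recl mulrDl -mulr_suml divff.
rewrite /p_of_eta (eq_bigr _ (fun l _ => eta_ratio l)) sum_eta invf_div.
by case: unliftP => [j'|] -> ; rewrite ?eta_ratio ?mul1r // mulrA divfK.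
Qed.

Lemma one_add_dot_theta_Fstat (R : realFieldType) d (lam : R)
    (p q : 'I_d.+1 -> R) :
  lam != 0 -> (forall l, p l != 0) -> q ord0 != 0 ->
  1 + lam * dotd (theta_of lam p) (Fstat q)
  = p ord0 / q ord0 * \sum_(l < d.+1) q l / p l.
Proof.
move=> lam_neq0 p_neq0 q0_neq0.
rewrite big_ord_recl mulrDr /dotd !mulr_sumr; congr (_ + _).
  by field; rewrite p_neq0 q0_neq0.
apply: eq_bigr => l _; rewrite /theta_of /Fstat; field.
by rewrite lam_neq0 !p_neq0 q0_neq0.
Qed.

Section FixedPointUpdate.
Variables (R : realFieldType) (d n : nat).
Variables (q : 'I_n -> 'I_d.+1 -> R) (p : 'I_d.+1 -> R).
Hypotheses (n_gt0 : (0 < n)%N) (p_gt0 : forall l, 0 < p l).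
Hypothesis q_gt0 : forall i l, 0 < q i l.

Definition pooled (l : 'I_d.+1) : R := p l * \sum_(i < n) cdiff (q i) p l.

Lemma pooled_gt0 l : 0 < pooled l.
Proof.
rewrite mulr_gt0 // sumr_ord_gt0 // => i.
by rewrite !divr_gt0 // sumr_ord_gt0 // => l'; rewrite divr_gt0.
Qed.

Lemma perturb_avg_cdiff :
  perturb p (avg (fun i => cdiff (q i) p)) =1
  (fun j => pooled j / \sum_(l < d.+1) pooled l).
Proof. by apply: perturb_scaler; rewrite invr_neq0 // pnatr_eq0 -lt0n. Qed.

Lemma eta_next_theta_of (lam : R) : lam != 0 ->
  eta_next lam (fun i => Fstat (q i)) (theta_of lam p) =1
  (fun j => pooled (lift ord0 j) / pooled ord0).
Proof.
move=> lam_neq0 j.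
have p_neq0 l : p l != 0 by rewrite gt_eqF.
have q_neq0 i l : q i l != 0 by rewrite gt_eqF.
have S_neq0 i : \sum_(l < d.+1) q i l / p l != 0.
  by rewrite gt_eqF // sumr_ord_gt0 // => l; rewrite divr_gt0.
have inv_factor i : (1 + lam * dotd (theta_of lam p) (Fstat (q i)))^-1
    = (p ord0)^-1 * (p ord0 * cdiff (q i) p ord0).
  rewrite one_add_dot_theta_Fstat // /cdiff; field.
  by rewrite p_neq0 q_neq0 S_neq0.
have P0_neq0 : pooled ord0 != 0 by rewrite gt_eqF ?pooled_gt0.
rewrite /eta_next /weight (eq_bigr _ (fun i _ => inv_factor i)) -mulr_sumr.
rewrite -mulr_sumr -/(pooled ord0); set P0 := pooled ord0.
rewrite /pooled mulr_sumr mulr_suml; apply: eq_bigr => i _.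
rewrite inv_factor /Fstat /cdiff; field.
by rewrite P0_neq0 S_neq0 !p_neq0 q_neq0.
Qed.

End FixedPointUpdate.

Theorem proposition2 (R : realFieldType) (sigma : R) (d n : nat)
    (q : 'I_n -> 'I_d.+1 -> R) (p : 'I_d.+1 -> R) :
  0 < sigma -> (0 < n)%N ->
  (forall i, in_simplex (q i)) -> in_simplex p ->
  forall j : 'I_d.+1,
    fp_update sigma q p j = perturb p (avg (fun i => cdiff (q i) p)) j.
Proof.
move=> sigma_gt0 n_gt0 q_simplex [p_gt0 _] j.
have q_gt0 i l : 0 < q i l by case: (q_simplex i).
have lam_neq0 : - sigma != 0 by rewrite oppr_eq0 gt_eqF.
rewrite perturb_avg_cdiff // /fp_update.
apply: p_of_eta_ratio; first by rewrite gt_eqF ?pooled_gt0.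
exact: eta_next_theta_of.
Qed.
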